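(* Let $G$ be a graph with no isolated vertex and let $H$ be a nontrivial graph. Then there exists a $\gamma_{(1,0)}^s(G\circ H)$-function $f$ such that $f(V(H_u))=\sum_{y\in V(H)}f(u,y)\le 2$ for every $u\in V(G)$.
   Context: All graphs are finite and simple; $N(v)$ denotes the open neighbourhood of a vertex $v$; a graph is nontrivial if it has at least two vertices. For an integer $l\ge 1$ and $w=(w_0,\dots,w_l)$ with $w_0\ge1$ and $w_i\ge 0$ integers, a function $f:V(G)\to\{0,\dots,l\}$, with $V_i=\{v: f(v)=i\}$, is a $w$-dominating function if $f(N(v))=\sum_{u\in N(v)}f(u)\ge w_i$ for every $v\in V_i$ and every $i$. Its weight is $\omega(f)=\sum_{v\in V(G)}f(v)$. For adjacent $v,u$ with $f(v)=0$, $f(u)>0$, the function $f_{u\to v}$ is defined by $f_{u\to v}(v)=1$, $f_{u\to v}(u)=f(u)-1$, and $f_{u\to v}(x)=f(x)$ otherwise. A $w$-dominating function $f$ is secure if for every $v$ with $f(v)=0$ there is $u\in N(v)$ with $f(u)>0$ such that $f_{u\to v}$ is also $w$-dominating. $\gamma_w^s(G)$ is the minimum weight of a secure $w$-dominating function, and a $\gamma_w^s(G)$-function is a secure $w$-dominating function of weight $\gamma_w^s(G)$. The lexicographic product $G\circ H$ has vertex set $V(G)\times V(H)$, with $(u,v)(x,y)$ an edge iff $ux\in E(G)$, or $u=x$ and $vy\in E(H)$. For $u\in V(G)$, $H_u$ is the subgraph of $G\circ H$ induced by $\{u\}\times V(H)$. *)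

(* A simple graph = symmetric irreflexive relation on a finType. *)
From mathcomp Require Import all_boot.
Set Implicit Arguments. Unset Strict Implicit. Unset Printing Implicit Defensive.

Section Defs.
Variable V : finType.
Variable e : rel V.

Definition fN (f : V -> nat) (v : V) : nat := \sum_(u | e v u) f u.

Definition weight (f : V -> nat) : nat := \sum_(v : V) f v.

(* w-dominating function, f : V -> {0..l}, w = (w_0,...,w_l) given as a seq *)
Definition wdom (l : nat) (w : seq nat) (f : V -> nat) : Prop :=
  (forall v, f v <= l) /\ (forall v, nth 0 w (f v) <= fN f v).

Definition fmove (f : V -> nat) (u v : V) : V -> nat :=
  fun x => if x == v then 1 else if x == u then (f u).-1 else f x.

Definition secure_wdom (l : nat) (w : seq nat) (f : V -> nat) : Prop :=
  wdom l w f /\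
  (forall v, f v = 0 ->
     exists u, [/\ e v u, 0 < f u & wdom l w (fmove f u v)]).

Definition gamma_ws_function (l : nat) (w : seq nat) (f : V -> nat) : Prop :=
  secure_wdom l w f /\
  (forall g, secure_wdom l w g -> weight f <= weight g).
End Defs.

Definition lexprod (T U : finType) (g : rel T) (h : rel U) : rel (T * U) :=
  fun a b => g a.1 b.1 || ((a.1 == b.1) && h a.2 b.2).

(* The (1,0)-dominating functions are the indicators of dominating sets, and
   the secure ones those of secure dominating sets, so it suffices to find a
   minimum secure dominating set S of G o H meeting every layer H_u in at most
   two vertices.  Start from any minimum S and let H_u carry at least three
   guards; pick a neighbour v of u.  Keep two guards (u, a), (u, b) and move
   the rest to H_v: if H_v is already guarded or H_u has four guards, top H_v
   up to two guards; otherwise H_u has exactly three guards, every layer next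
   to H_u is empty, and a single guard (v, c) takes the place of the third
   guard (u, e').  Since the product joins whole layers, two guards in H_u
   dominate (and defend) the layers next to H_u, a guard in H_v dominates H_u,
   and all other vertices are dominated and defended exactly as in S.  The new
   set is no larger and has fewer overfull layers, so iterating terminates. *)

From mathcomp Require Import all_boot zify.
From Stdlib Require Import FunctionalExtensionality.

Set Implicit Arguments. Unset Strict Implicit. Unset Printing Implicit Defensive.

Section SecureDomination.
Variables (V : finType) (e : rel V).
Implicit Types (A : {set V}) (x y : V).

Definition dominating (A : {set V}) : bool :=
  [forall x, (x \notin A) ==> [exists y, e x y && (y \in A)]].

Lemma dominatingP A :
  reflect (forall x, x \notin A -> exists2 y, e x y & y \in A) (dominating A).
Proof.
apply: (iffP forallP) => [domA x xA | domA x].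
  by have /implyP/(_ xA)/existsP[y /andP[]] := domA x; exists y.
by apply/implyP => /domA[y exy yA]; apply/existsP; exists y; rewrite exy.
Qed.

Definition secure_dominating (A : {set V}) : bool :=
  dominating A &&
  [forall x, (x \notin A) ==>
     [exists y, [&& e x y, y \in A & dominating (x |: A :\ y)]]].

Lemma secure_dominatingP A :
  reflect (dominating A /\ forall x, x \notin A ->
             exists y, [/\ e x y, y \in A & dominating (x |: A :\ y)])
          (secure_dominating A).
Proof.
apply: (iffP andP) => -[domA secA]; split=> //.
  move=> x xA.
  by have /implyP/(_ xA)/existsP[y /and3P[]] := forallP secA x; exists y.
apply/forallP => x; apply/implyP => /secA[y [exy yA domB]].
by apply/existsP; exists y; rewrite exy yA.
Qed.

Definition indicator (A : {set V}) (x : V) : nat := x \in A.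

Lemma weight_indicator A : weight (indicator A) = #|A|.
Proof. by rewrite /weight -sum1_card [RHS]big_mkcond. Qed.

Lemma fN_indicator_gt0 A x :
  (0 < fN e (indicator A) x) = [exists y, e x y && (y \in A)].
Proof.
rewrite /fN lt0n sum_nat_eq0 negb_forall; apply: eq_existsb => y.
by rewrite /indicator; case: (e x y); case: (y \in A).
Qed.

Lemma wdom_indicator A : wdom e 1 [:: 1; 0] (indicator A) <-> dominating A.
Proof.
split=> [[_ domA] | domA].
  apply/forallP => x; apply/implyP => xA; rewrite -fN_indicator_gt0.
  by have := domA x; rewrite /indicator (negbTE xA).
split=> x; first by rewrite /indicator; case: (x \in A).
have /implyP := forallP domA x; rewrite -fN_indicator_gt0 /indicator.
by case: (x \in A) => //= ->.
Qed.

Lemma fmove_indicator A x y : y \in A -> x \notin A ->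
  fmove (indicator A) y x = indicator (x |: A :\ y).
Proof.
move=> yA xA; apply: functional_extensionality => z.
rewrite /fmove /indicator !inE yA.
by case: eqVneq => //= _; case: eqVneq.
Qed.

Lemma secure_wdom_indicator A :
  secure_wdom e 1 [:: 1; 0] (indicator A) <-> secure_dominating A.
Proof.
rewrite /secure_wdom wdom_indicator; split=> [[domA secA] | ].
  apply/secure_dominatingP; split=> // x xA.
  have [|y [exy yA domB]] := secA x; first by rewrite /indicator (negbTE xA).
  have {}yA : y \in A by move: yA; rewrite /indicator; case: (y \in A).
  by exists y; split=> //; apply/wdom_indicator; rewrite -fmove_indicator.
case/secure_dominatingP=> domA secA; split=> // x x0.
have xA : x \notin A by move: x0; rewrite /indicator; case: (x \in A).
have [y [exy yA domB]] := secA x xA.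
exists y; split=> //; first by rewrite /indicator yA.
by rewrite fmove_indicator //; apply/wdom_indicator.
Qed.

Lemma wdom_support f :
  wdom e 1 [:: 1; 0] f -> f = indicator [set x | f x != 0].
Proof.
move=> [f_le1 _]; apply: functional_extensionality => x.
by rewrite /indicator inE; case: (f x) (f_le1 x) => [|[]].
Qed.

End SecureDomination.

Section LexicographicProduct.
Variables (T U : finType) (g : rel T) (h : rel U).
Hypotheses (g_sym : symmetric g) (g_irr : irreflexive g).
Implicit Types (S R B : {set T * U}) (Fu Fv : {set U}) (z r : T * U).

Local Notation e := (lexprod g h).

Lemma lexprodE z r : e z r = g z.1 r.1 || (z.1 == r.1) && h z.2 r.2.
Proof. by []. Qed.

Lemma lexprod_g z r : g z.1 r.1 -> e z r.
Proof. by rewrite lexprodE => ->. Qed.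

Lemma neq_fst z r : z.1 != r.1 -> z != r.
Proof. by apply: contraNneq => ->. Qed.

Lemma g_neq u v : g u v -> u != v.
Proof. by apply: contraTneq => ->; rewrite g_irr. Qed.

Definition layer S u : {set U} := [set y | (u, y) \in S].

Lemma sum_indicator_layer S u : \sum_y indicator S (u, y) = #|layer S u|.
Proof.
by rewrite -weight_indicator; apply: eq_bigr => y _; rewrite /indicator inE.
Qed.

Lemma card_layers S : #|S| = \sum_u #|layer S u|.
Proof.
rewrite -weight_indicator /weight.
rewrite -[RHS](eq_bigr _ (fun u _ => sum_indicator_layer S u)) pair_bigA.
by apply: eq_bigr => -[].
Qed.

Definition relayer S u v Fu Fv : {set T * U} :=
  [set z | if z.1 == u then z.2 \in Fu
           else if z.1 == v then z.2 \in Fv else z \in S].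

Lemma in_relayer S u v Fu Fv z :
  (z \in relayer S u v Fu Fv) =
  if z.1 == u then z.2 \in Fu else if z.1 == v then z.2 \in Fv else z \in S.
Proof. by rewrite inE. Qed.

Lemma layer_relayer S u v Fu Fv w :
  layer (relayer S u v Fu Fv) w =
  if w == u then Fu else if w == v then Fv else layer S w.
Proof.
apply/setP => y; rewrite inE in_relayer /=.
by do 2!case: ifP => _ //; rewrite inE.
Qed.

Lemma card_relayer S u v Fu Fv : u != v ->
  #|Fu| + #|Fv| <= #|layer S u| + #|layer S v| ->
  #|relayer S u v Fu Fv| <= #|S|.
Proof.
move=> uv le_uv; rewrite !card_layers.
have split_uv (F : T -> nat) :
    \sum_w F w = F u + F v + \sum_(w | (w != u) && (w != v)) F w.
  by rewrite (bigD1 u) //= (bigD1 v) 1?eq_sym //= addnA.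
rewrite !split_uv !layer_relayer eqxx eq_sym (negbTE uv) eqxx leq_add //.
rewrite (eq_bigr (fun w => #|layer S w|)) //.
by move=> w /andP[/negbTE wu /negbTE wv]; rewrite layer_relayer wu wv.
Qed.

Definition heavy S := [set u | 2 < #|layer S u|].

Lemma heavy_relayer S u v Fu Fv : u != v -> #|Fu| <= 2 ->
  #|Fv| <= maxn #|layer S v| 2 -> u \in heavy S ->
  #|heavy (relayer S u v Fu Fv)| < #|heavy S|.
Proof.
move=> uv Fu2 Fv_le uH; rewrite (cardsD1 u (heavy S)) uH ltnS.
apply/subset_leq_card/subsetP => w; rewrite !inE layer_relayer.
case: eqP => [-> | _]; first by rewrite ltnNge Fu2.
by case: eqP => [-> | _] //; lia.
Qed.

(* A guard of R in H_v may be replaced by any guard of B in H_v: outside the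
   closed neighbourhood of H_u, a vertex adjacent to one vertex of H_v is
   adjacent to all of H_v. *)
Lemma dominating_transfer u v R B : g u v -> dominating e R ->
  (exists y, (u, y) \in B) -> (exists y, (v, y) \in B) ->
  (forall r, r \in R -> r.1 != u -> r.1 != v -> r \in B) ->
  dominating e B.
Proof.
move=> guv /dominatingP domR [a uB] [c vB] RB; apply/dominatingP => z zB.
case: (eqVneq z.1 u) => [zu | zu].
  by exists (v, c) => //; apply: lexprod_g; rewrite zu.
case gzu: (g z.1 u); first by exists (u, a) => //; apply: lexprod_g.
have zv : z.1 != v by apply: contraFneq gzu => ->; rewrite g_sym.
have [r zr rR] : exists2 r, e z r & r \in R.
  by apply: domR; apply: contra zB => /RB; apply.
have ru : r.1 != u.
  by apply: contraTneq zr => ru; rewrite lexprodE ru gzu (negbTE zu).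
case: (eqVneq r.1 v) => [rv | rv]; last by exists r => //; apply: RB.
exists (v, c) => //; apply: lexprod_g.
by move: zr; rewrite lexprodE rv (negbTE zv) orbF.
Qed.

Section Relayer.
Variables (S : {set T * U}) (u v : T) (a b c : U) (Fv : {set U}).
Hypotheses (S_secure : secure_dominating e S) (guv : g u v) (neq_ab : a != b).
Hypotheses (Fv_c : c \in Fv) (layer_sub_Fv : layer S v \subset Fv).
Hypothesis Fv_spare : forall r, r \in S -> exists2 c', c' \in Fv & (v, c') != r.

Local Notation A := (relayer S u v [set a; b] Fv).

Let S_dom : dominating e S := (elimT (secure_dominatingP e S) S_secure).1.
Let neq_uv : u != v := g_neq guv.

Lemma relayer_u y : ((u, y) \in A) = (y \in [set a; b]).
Proof. by rewrite in_relayer eqxx. Qed.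

Lemma relayer_v y : ((v, y) \in A) = (y \in Fv).
Proof. by rewrite in_relayer eq_sym (negbTE neq_uv) eqxx. Qed.

Lemma relayer_off z : z.1 != u -> z.1 != v -> (z \in A) = (z \in S).
Proof. by move=> /negbTE zu /negbTE zv; rewrite in_relayer zu zv. Qed.

Lemma sub_relayer z : z.1 != u -> z \in S -> z \in A.
Proof.
move=> zu zS; case: (eqVneq z.1 v) => [zv | zv]; last by rewrite relayer_off.
case: z zu zv zS => w y /= zu -> zS.
by rewrite relayer_v (subsetP layer_sub_Fv) ?inE.
Qed.

Lemma dominating_relayer : dominating e A.
Proof.
apply: (dominating_transfer guv S_dom).
- by exists a; rewrite relayer_u set21.
- by exists c; rewrite relayer_v.
- by move=> r rS ru rv; rewrite relayer_off.
Qed.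

Lemma dominating_relayer_swap_u z y :
  y \in [set a; b] -> dominating e (z |: A :\ (u, y)).
Proof.
move=> yab; have [y' y'ab y'y] : exists2 y', y' \in [set a; b] & y' != y.
  case/set2P: yab => ->; first by exists b; rewrite ?set22 // eq_sym.
  by exists a; rewrite ?set21.
apply: (dominating_transfer guv S_dom).
- by exists y'; rewrite in_setU1 in_setD1 relayer_u y'ab xpair_eqE eqxx y'y orbT.
- exists c; rewrite in_setU1 in_setD1 relayer_v Fv_c xpair_eqE.
  by rewrite [v == u]eq_sym (negbTE neq_uv) orbT.
- move=> r rS ru rv; rewrite in_setU1 in_setD1 relayer_off // rS.
  by rewrite (@neq_fst r (u, y)) ?orbT.
Qed.

Lemma relayer_secure :
  (forall y, (u, y) \notin A ->
     exists z, [/\ e (u, y) z, z \in A & dominating e ((u, y) |: A :\ z)]) ->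
  secure_dominating e A.
Proof.
move=> defend_u; apply/secure_dominatingP; split=> [|[w y] wyA].
  exact: dominating_relayer.
case: (eqVneq w u) wyA => [-> | wu] wyA; first exact: defend_u.
case gwu: (g w u).
  exists (u, a); split; first exact: lexprod_g.
    by rewrite relayer_u set21.
  exact: dominating_relayer_swap_u (set21 a b).
have wv : w != v by apply: contraFneq gwu => ->; rewrite g_sym.
have wyS : (w, y) \notin S by rewrite -relayer_off.
have /secure_dominatingP[_ /(_ _ wyS)[r [wyr rS domR]]] := S_secure.
have ru : r.1 != u.
  by apply: contraTneq wyr => ru; rewrite lexprodE ru gwu /= (negbTE wu).
have [c' c'Fv c'r] := Fv_spare rS.
exists r; split=> //; first exact: sub_relayer.
apply: (dominating_transfer guv domR).
- exists a; rewrite in_setU1 in_setD1 relayer_u set21 andbT.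
  by rewrite (@neq_fst (u, a) r) ?orbT // eq_sym.
- by exists c'; rewrite in_setU1 in_setD1 relayer_v c'Fv eq_sym c'r orbT.
- move=> r'; rewrite !in_setU1 !in_setD1 => /orP[-> // | /andP[r'r r'S]] r'u r'v.
  by rewrite r'r relayer_off // r'S orbT.
Qed.

End Relayer.

Lemma relayer_secure_spread S u v a b c d :
  secure_dominating e S -> g u v -> a != b -> c != d ->
  secure_dominating e (relayer S u v [set a; b] (layer S v :|: [set c; d])).
Proof.
move=> sS guv ab cd; have uv := g_neq guv.
have Fv_c : c \in layer S v :|: [set c; d] by rewrite !inE eqxx orbT.
have Fv_d : d \in layer S v :|: [set c; d] by rewrite !inE eqxx !orbT.
apply: (relayer_secure (c := c)) => //; first exact: subsetUl.
  move=> r _; case: (eqVneq r (v, c)) => [-> | rvc].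
    by exists d; rewrite // xpair_eqE eqxx eq_sym.
  by exists c; rewrite // eq_sym.
move=> y _; exists (v, c); split; first exact: lexprod_g.
  by rewrite relayer_v.
have /secure_dominatingP[S_dom _] := sS.
apply: (dominating_transfer guv S_dom).
- by exists a; rewrite in_setU1 in_setD1 relayer_u set21 (@neq_fst (u, a)) ?orbT.
- exists d; rewrite in_setU1 in_setD1 relayer_v // Fv_d.
  by rewrite !xpair_eqE eqxx [d == c]eq_sym cd orbT.
- move=> r rS ru rv; rewrite in_setU1 in_setD1 relayer_off // rS.
  by rewrite (@neq_fst r (v, c)) ?orbT.
Qed.

Lemma relayer_secure_fill S u v a b e' c :
  secure_dominating e S -> g u v -> a != b -> e' \notin [set a; b] ->
  layer S u = [set a; b; e'] -> (forall w, g u w -> layer S w = set0) ->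
  secure_dominating e (relayer S u v [set a; b] [set c]).
Proof.
move=> sS guv ab e'ab Su nbr_empty; have uv := g_neq guv.
have notin_nbr w y : g u w -> (w, y) \notin S.
  by move=> /nbr_empty Sw; have := in_set0 y; rewrite -Sw inE => ->.
have Su_mem y : ((u, y) \in S) = (y \in [set a; b; e']) by rewrite -Su inE.
have Sab_e' y : (y \in [set a; b; e']) = (y \in [set a; b]) || (y == e').
  by rewrite !inE.
have trade : relayer S u v [set a; b] [set c] :\ (v, c) = S :\ (u, e').
  apply/setP => -[w y]; rewrite !in_setD1 in_relayer /= !xpair_eqE.
  case: (eqVneq w u) => [-> | wu] /=.
    rewrite (negbTE uv) Su_mem Sab_e' /=.
    by case: eqVneq => [-> | _]; rewrite ?(negbTE e'ab) ?orbF.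
  case: (eqVneq w v) => [-> | wv] /=; last by [].
  by rewrite (negbTE (notin_nbr _ y guv)) inE andNb.
apply: (relayer_secure (c := c)) => //; rewrite ?set11 ?nbr_empty ?sub0set //.
  move=> r rS; exists c; rewrite ?set11 //.
  by apply: contraTneq rS => <-; apply: notin_nbr.
move=> y uyA.
have yab : y \notin [set a; b] by rewrite -(relayer_u S u v a b [set c]).
have /secure_dominatingP[S_dom S_def] := sS.
case: (eqVneq y e') => [-> | ye].
  exists (v, c); split; [exact: lexprod_g | by rewrite relayer_v ?set11 |].
  by rewrite trade setD1K // Su_mem Sab_e' eqxx orbT.
have uyS : (u, y) \notin S by rewrite Su_mem Sab_e' negb_or yab.
have [[w y'] [yr wS domR]] := S_def _ uyS.
have wu : w = u.
  move: yr; rewrite lexprodE /= => /orP[guw | /andP[/eqP <- _] //].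
  by have := notin_nbr _ y' guw; rewrite wS.
move: wS yr domR; rewrite wu Su_mem Sab_e' => /orP[y'ab | /eqP ->] yr domR.
  exists (u, y'); split=> //; first by rewrite relayer_u.
  exact: dominating_relayer_swap_u sS guv ab (set11 c) _ _ y'ab.
exists (v, c); split; [exact: lexprod_g | by rewrite relayer_v ?set11 |].
by rewrite trade.
Qed.

Lemma exists_setU2_card (L : {set U}) : 1 < #|U| ->
  exists c d, c != d /\ #|L :|: [set c; d]| = maxn #|L| 2.
Proof.
move=> /card_gt1P[x [y [_ _ xy]]].
case: (ltnP 1 #|L|) => [L2 | L1].
  have /card_gt1P[c [d [cL dL cd]]] := L2; exists c, d; split=> //.
  suff -> : L :|: [set c; d] = L by lia.
  by apply/setUidPl/subsetP => z /set2P[]->.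
have [c Lc] : exists c, L \subset [set c].
  case: (set_0Vmem L) => [-> | [c cL]]; first by exists x; apply: sub0set.
  by exists c; apply/subsetP => z; rewrite inE (card_le1P L1 c cL).
have [d dc] : exists d, d != c.
  by case: (eqVneq x c) => [xc | ]; [exists y; rewrite -xc eq_sym | exists x].
exists c, d; split; first by rewrite eq_sym.
suff -> : L :|: [set c; d] = [set c; d] by rewrite cards2 eq_sym dc; lia.
by apply/setUidPr/(subset_trans Lc); rewrite sub1set set21.
Qed.

Lemma heavy_step S u : 1 < #|U| -> (exists v, g u v) ->
  secure_dominating e S -> u \in heavy S ->
  exists A, [/\ secure_dominating e A, #|A| <= #|S| & #|heavy A| < #|heavy S|].
Proof.
move=> U2 [v0 guv0] sS uH; have Xu3 : 2 < #|layer S u| by move: uH; rewrite inE.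
have /card_gt2P[a [b [e' [[aX bX eX] [ab be ea]]]]] := Xu3.
have spread v : g u v -> (0 < #|layer S v|) || (3 < #|layer S u|) ->
    exists A, [/\ secure_dominating e A, #|A| <= #|S| & #|heavy A| < #|heavy S|].
  move=> guv Hv; have uv := g_neq guv.
  have [c [d [cd Lcd]]] := exists_setU2_card (layer S v) U2.
  exists (relayer S u v [set a; b] (layer S v :|: [set c; d])); split.
  - exact: relayer_secure_spread.
  - apply: card_relayer => //; rewrite cards2 ab Lcd /=.
    by case/orP: Hv; lia.
  - by apply: heavy_relayer; rewrite ?cards2 ?ab ?Lcd.
case: (pickP [pred v | g u v && (0 < #|layer S v|)]) => [v | no_nbr].
  by case/andP=> guv Sv; apply: (spread v guv); rewrite Sv.
case: (ltnP 3 #|layer S u|) => [Xu4 | Xu_le3].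
  by apply: (spread v0 guv0); rewrite Xu4 orbT.
have nbr_empty w : g u w -> layer S w = set0.
  move=> guw; apply/eqP; rewrite -cards_eq0 -leqn0 leqNgt.
  by have := no_nbr w; rewrite /= guw /= => ->.
have e'ab : e' \notin [set a; b] by rewrite !inE negb_or ea eq_sym be.
have Su : layer S u = [set a; b; e'].
  apply/eqP; rewrite eq_sym eqEcard; apply/andP; split.
    by rewrite !subUset !sub1set aX bX eX.
  apply: leq_trans Xu_le3 _; apply/card_gt2P; exists a, b, e'.
  by rewrite !inE !eqxx !orbT.
exists (relayer S u v0 [set a; b] [set a]); split.
- exact: relayer_secure_fill sS guv0 ab e'ab Su nbr_empty.
- apply: card_relayer; first exact: g_neq.
  by rewrite cards2 ab cards1 (nbr_empty v0 guv0) cards0 addn0.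
- apply: heavy_relayer; rewrite ?g_neq ?cards2 ?ab ?cards1 //.
  by rewrite (nbr_empty v0 guv0) cards0.
Qed.

Lemma exists_secure_light S : 1 < #|U| -> (forall u, exists v, g u v) ->
  secure_dominating e S ->
  exists A, [/\ secure_dominating e A, #|A| <= #|S| & heavy A = set0].
Proof.
move=> U2 noiso; have [n] := ubnP #|heavy S|.
elim: n S => // n IH S; rewrite ltnS => Sn sS.
case: (set_0Vmem (heavy S)) => [S0 | [u uH]]; first by exists S.
have [A [sA AS AS_heavy]] := heavy_step U2 (noiso u) sS uH.
have [B [sB BA B0]] := IH A (leq_trans AS_heavy Sn) sA.
by exists B; split=> //; apply: leq_trans AS.
Qed.

End LexicographicProduct.

Theorem lemma5 (T : finType) (g : rel T) (g_sym : symmetric g)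
  (g_irr : irreflexive g) (U : finType) (h : rel U) (h_sym : symmetric h)
  (h_irr : irreflexive h)
  (g_noiso : forall u : T, exists v : T, g u v)
  (h_nontriv : 1 < #|U|) :
  exists f : T * U -> nat,
    gamma_ws_function (lexprod g h) 1 [:: 1; 0] f /\
    (forall u : T, \sum_(y : U) f (u, y) <= 2).
Proof.
have sT : secure_dominating (lexprod g h) setT.
  by apply/secure_dominatingP; split; [apply/dominatingP|] => x; rewrite inE.
case: (arg_minnP (fun A : {set T * U} => #|A|) sT) => S0 sS0 minS0.
have [A [sA AS0 A0]] := exists_secure_light g_sym g_irr h_nontriv g_noiso sS0.
exists (indicator A); split.
  split=> [|f sf]; first exact/secure_wdom_indicator.
  have f_ind := wdom_support sf.1; rewrite f_ind in sf *.
  rewrite !weight_indicator; apply: leq_trans AS0 (minS0 _ _).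
  exact/secure_wdom_indicator.
move=> u; rewrite sum_indicator_layer leqNgt; apply/negP => uH.
have : u \in heavy A by rewrite inE.
by rewrite A0 inE.
Qed.
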